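(* Consider the following insertion-only procedure for maintaining a coloring of a set $S$ of objects, where $S$ is partitioned into sets $S_0,\ldots,S_\ell$, $\ell=\lceil\log n\rceil$, each in one of the states empty, full, or in migration, and where for each $i$ there are $\ell-i+1$ color sets $C(i,t)$, $0\le t\le \ell-i$, each of $\gamma_{\mathrm{um}}(2^i)$ colors. To insert an object $s$: (1) let $i$ be the smallest index with $S_i$ empty (if $i=\ell+1$ a new set is introduced and $\ell$ is redefined); (2) set $S_i:=\{s\}\cup S_0\cup\cdots\cup S_{i-1}$, mark $S_0,\ldots,S_{i-1}$ empty and $S_i$ in migration; (3) take an unused color set $C(i,t)$ and compute a unimax coloring of $S_i$ with it, whose colors are called final colors; only $s$ is given its final color now; (4) for each set $S_k$ in migration, recolor to its final color one object of $S_k$ whose current color differs from its final color and whose final color is maximal among such objects; if all objects of $S_k$ now have their final color, mark $S_k$ full. Then in step (3), at least one of the color sets $C(i,t)$ with $0\le t\le\ell-i$ is currently unused (i.e., not currently assigned as the color of any object of $S$).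
   Context: Initially $S$ is empty and all sets are empty. A unimax coloring of a set of objects (regions with respect to points, or points with respect to ranges) is a coloring by integers such that for every point (resp. range) $q$ related to at least one object, the maximum color among the objects related to $q$ is attained by exactly one of them. $\gamma_{\mathrm{um}}$ is a non-decreasing function such that every $m$ objects of the family admit a unimax coloring with $\gamma_{\mathrm{um}}(m)$ colors. *)

From mathcomp Require Import all_boot.
Set Implicit Arguments. Unset Strict Implicit. Unset Printing Implicit Defensive.

(* A unimax coloring f of the objects in A w.r.t. the relation [rel q o]
   ("point/range q is related to object o"): for every q related to at least
   one object of A, the maximum color among the objects of A related to q is
   attained by exactly one of them. *)
Definition unimax (O : eqType) (P : Type) (rel : P -> O -> bool)
    (A : seq O) (f : O -> nat) : Prop :=
  forall q, (exists o, o \in A /\ rel q o) ->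
    exists o, [/\ o \in A, rel q o,
      (forall o', o' \in A -> rel q o' -> f o' <= f o) &
      (forall o', o' \in A -> rel q o' -> f o' = f o -> o' = o)].

Definition gamma_um (O : eqType) (P : Type) (rel : P -> O -> bool)
    (gamma : nat -> nat) : Prop :=
  {homo gamma : m n / m <= n} /\
  forall A : seq O, uniq A ->
    exists f, unimax rel A f /\ forall o, o \in A -> f o < gamma (size A).

Inductive status := SEmpty | SFull | SMigr.

(* A color is a triple (i, t, c): the c-th color (c < gamma (2^i)) of the
   color set C(i,t).  Colors of different color sets are different. *)
Definition color := (nat * nat * nat)%type.

Record state (O : Type) := mkState {
  lvl  : nat;
  part : nat -> seq O;
  stat : nat -> status;
  cur  : O -> color;
  fin  : O -> color
}.

Definition init_state (O : Type) (l0 : nat) : state O :=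
  mkState l0 (fun _ => [::]) (fun _ => SEmpty)
          (fun _ => (0, 0, 0)) (fun _ => (0, 0, 0)).

Definition inS (O : eqType) (st : state O) (o : O) : Prop :=
  exists k, o \in part st k.

Definition used (O : eqType) (st : state O) (i t : nat) : Prop :=
  exists o, inS st o /\ (cur st o).1.1 = i /\ (cur st o).1.2 = t.

Definition firstEmpty (O : Type) (st : state O) (i : nat) : Prop :=
  stat st i = SEmpty /\ forall j, j < i -> stat st j <> SEmpty.

(* One insertion of the object s, transforming st into st' (nondeterministic
   in the choice of t, of the unimax coloring g, and of the recolored
   objects r k among ties). *)
Definition insert_step (O : eqType) (P : Type) (rel : P -> O -> bool)
    (gamma : nat -> nat) (st : state O) (s : O) (st' : state O) : Prop :=
  ~ inS st s /\
  exists i, firstEmpty st i /\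
  let l1 := maxn (lvl st) i in
  let Si := s :: flatten [seq part st j | j <- iota 0 i] in
  let part1 := fun k => if k < i then [::] else if k == i then Si else part st k in
  let stat1 := fun k => if k < i then SEmpty else if k == i then SMigr else stat st k in
  exists (t : nat) (g : O -> nat) (r : nat -> option O),
  let fin1 := fun o => if o \in Si then (i, t, g o) else fin st o in
  let cur1 := fun o => if o == s then (i, t, g s) else cur st o in
  t <= l1 - i /\ ~ used st i t /\
      unimax rel Si g /\ (forall o, o \in Si -> g o < gamma (2 ^ i)) /\
      (forall k, stat1 k = SMigr ->
         (exists o, o \in part1 k /\ cur1 o <> fin1 o) ->
         exists o, [/\ r k = Some o, o \in part1 k, cur1 o <> fin1 o &
           forall o', o' \in part1 k -> cur1 o' <> fin1 o' ->
             (fin1 o').2 <= (fin1 o).2]) /\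
      (forall k, (stat1 k <> SMigr \/ forall o, o \in part1 k -> cur1 o = fin1 o) ->
         r k = None) /\
      (lvl st' = l1 /\
          (forall k, part st' k = part1 k) /\
          (forall o, fin st' o = fin1 o) /\
          (forall o, (exists k, r k = Some o) -> cur st' o = fin1 o) /\
          (forall o, ~ (exists k, r k = Some o) -> cur st' o = cur1 o) /\
          (forall k,
             ((stat1 k = SMigr /\ forall o, o \in part1 k -> cur st' o = fin1 o) ->
                stat st' k = SFull) /\
             (~ (stat1 k = SMigr /\ forall o, o \in part1 k -> cur st' o = fin1 o) ->
                stat st' k = stat1 k))).

Inductive reachable (O : eqType) (P : Type) (rel : P -> O -> bool)
    (gamma : nat -> nat) (l0 : nat) : state O -> Prop :=
  | reach_init : reachable rel gamma l0 (init_state O l0)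
  | reach_step st s st' : reachable rel gamma l0 st ->
      insert_step rel gamma st s st' -> reachable rel gamma l0 st'.

From mathcomp Require Import all_boot zify.
From Stdlib Require Import Classical.
Set Implicit Arguments. Unset Strict Implicit. Unset Printing Implicit Defensive.

(* Every reachable state satisfies an invariant: the sets S_k are disjoint
   with |S_k| <= 2^k, full sets carry their final colors, and a set S_k in
   migration has at most E(k) = sum of 2^j over the empty S_j, j < k, objects
   not yet in their final color.  An insertion whose first empty index i lies
   below k fills 2^i slots and frees 2^i - 1, so it lowers E(k) by exactly one
   while recoloring one object of S_k.  Hence when i is the first empty index,
   E(j) = 0 and S_j is full for every j < i, so the level-i colors in use all
   belong to sets S_k with i < k <= l, each of which uses a single color set
   of level i: at most l - i of the l - i + 1 sets C(i, t) are taken. *)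

Definition is_empty (x : status) : bool := if x is SEmpty then true else false.

Definition empty_weight (f : nat -> status) (k : nat) : nat :=
  \sum_(j < k | is_empty (f j)) 2 ^ j.

Lemma empty_weight_none f k :
  (forall j, j < k -> f j <> SEmpty) -> empty_weight f k = 0.
Proof. by move=> ne; rewrite /empty_weight big1 // => j; case: (f j) (ne j (ltn_ord j)). Qed.

Lemma empty_weightS f k :
  empty_weight f k.+1 = empty_weight f k + (if is_empty (f k) then 2 ^ k else 0).
Proof. by rewrite /empty_weight big_mkcond big_ord_recr /= -big_mkcond. Qed.

Lemma empty_weight_all f k :
  (forall j, j < k -> f j = SEmpty) -> (empty_weight f k).+1 = 2 ^ k.
Proof.
elim: k => [|k IHk] e; first by rewrite /empty_weight big_ord0.
rewrite empty_weightS e // expnS -addSn IHk => [|j jk]; [lia | apply: e; lia].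
Qed.

Lemma empty_weight_fill f f' i k :
    f i = SEmpty -> (forall j, j < i -> f j <> SEmpty) ->
    (forall j, j < i -> f' j = SEmpty) -> f' i <> SEmpty ->
    (forall j, i < j -> is_empty (f' j) = is_empty (f j)) ->
  i < k -> (empty_weight f' k).+1 = empty_weight f k.
Proof.
move=> fi f_lt f'_lt f'i f'_gt; elim: k => // k IHk.
rewrite !empty_weightS ltnS leq_eqVlt => /orP [/eqP <-|ik]; last first.
  by rewrite -IHk // f'_gt.
rewrite fi (empty_weight_none f_lt) -addSn (empty_weight_all f'_lt) add0n.
by case: (f' i) f'i => // _; rewrite addn0.
Qed.

Lemma count_lt_subpred (T : eqType) (p q : pred T) (s : seq T) x :
  {in s, subpred q p} -> x \in s -> p x -> ~~ q x -> count q s < count p s.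
Proof.
move=> qp xs px nqx; have := count_predUI q (predD p q) s.
rewrite (@eq_in_count _ (predU q (predD p q)) p) => [|y /qp /=]; last by case: (q y) => // ->.
rewrite (@eq_in_count _ (predI q (predD p q)) pred0) => [|y _ /=]; last by case: (q y).
rewrite count_pred0 addn0 => ->; rewrite -addn1 leq_add2l lt0n -lt0n -has_count.
by apply/hasP; exists x => //=; rewrite nqx.
Qed.

Lemma size_flatten_pow2 (T : Type) (f : nat -> seq T) k :
  (forall j, j < k -> size (f j) <= 2 ^ j) ->
  size (flatten [seq f j | j <- iota 0 k]) < 2 ^ k.
Proof.
elim: k => [|k IHk] small //.
rewrite -[k.+1]addn1 iotaD map_cat flatten_cat size_cat /= cats0 expnD expn1 muln2 -addnn.
by rewrite -addSn leq_add ?IHk // => [j jk|]; apply: small; lia.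
Qed.

Lemma exists_nat_notin (L : seq nat) n : size L < n -> exists2 t, t < n & t \notin L.
Proof.
move=> Ln; have /allPn [t] : ~~ all (mem L) (iota 0 n).
  apply/negP => /allP sub; have := uniq_leq_size (iota_uniq 0 n) sub.
  by rewrite size_iota leqNgt Ln.
by rewrite mem_iota => /andP [_ tn] tL; exists t.
Qed.

Definition finished (O : eqType) (st : state O) (k : nat) : Prop :=
  forall o, o \in part st k -> cur st o = fin st o.

Definition unfinished (O : eqType) (st : state O) (k : nat) : nat :=
  count (fun o => cur st o != fin st o) (part st k).

(* The final colors of S_k come from C(k, F k), and the objects of S_k whose
   current color lies at level j all use the same color set C(j, T k j). *)
Definition colorsets_ok (O : eqType) (st : state O)
    (F : nat -> nat) (T : nat -> nat -> nat) : Prop :=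
  [/\ forall k o, o \in part st k -> (fin st o).1 = (k, F k),
      forall k o, o \in part st k -> (cur st o).1.2 = T k (cur st o).1.1
    & forall k, T k k = F k].

Record wf_state (O : eqType) (st : state O) : Prop := {
  wf_disjoint : forall j k o, o \in part st j -> o \in part st k -> j = k;
  wf_empty : forall k, stat st k = SEmpty -> part st k = [::];
  wf_lvl : forall k, lvl st < k -> part st k = [::];
  wf_size : forall k, size (part st k) <= 2 ^ k;
  wf_colorsets : exists F T, colorsets_ok st F T;
  wf_full : forall k, stat st k = SFull -> finished st k;
  wf_migr : forall k, stat st k = SMigr ->
    0 < unfinished st k <= empty_weight (stat st) k }.

Lemma unfinished_gt0 (O : eqType) (st : state O) k :
  ~ finished st k -> 0 < unfinished st k.
Proof.
move=> unfin; rewrite -has_count; apply/negPn/negP => /hasPn all_final.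
by apply: unfin => o /all_final; rewrite negbK => /eqP.
Qed.

Lemma wf_init (O : eqType) l0 : wf_state (init_state O l0).
Proof. by split => //; exists (fun _ => 0), (fun _ _ => 0). Qed.

Lemma wf_below_first_empty (O : eqType) (st : state O) i j :
  wf_state st -> firstEmpty st i -> j < i -> stat st j = SFull.
Proof.
move=> wf [_ nonempty] ji; case sj: (stat st j) => //; first by have := nonempty j ji sj.
have := wf_migr wf sj; rewrite empty_weight_none; first lia.
by move=> j' j'j; apply: nonempty (ltn_trans j'j ji).
Qed.

Section Insertion.

Variables (O : eqType) (st st' : state O) (s : O) (i t : nat) (g : O -> nat).
Variable r : nat -> option O.

Hypothesis wf : wf_state st.
Hypothesis s_fresh : ~ inS st s.
Hypothesis i_first : firstEmpty st i.

Let Si := s :: flatten [seq part st j | j <- iota 0 i].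
Let part1 k := if k < i then [::] else if k == i then Si else part st k.
Let stat1 k := if k < i then SEmpty else if k == i then SMigr else stat st k.
Let fin1 o := if o \in Si then (i, t, g o) else fin st o.
Let cur1 o := if o == s then (i, t, g s) else cur st o.

(* Weaker than step (4) of [insert_step]: which unfinished object is
   recolored does not matter here. *)
Hypothesis recolor : forall k, stat1 k = SMigr ->
  (exists o, o \in part1 k /\ cur1 o <> fin1 o) ->
  exists o, [/\ r k = Some o, o \in part1 k & cur1 o <> fin1 o].
Hypothesis lvl_after : lvl st' = maxn (lvl st) i.
Hypothesis part_after : forall k, part st' k = part1 k.
Hypothesis fin_after : forall o, fin st' o = fin1 o.
Hypothesis cur_recolored : forall o, (exists k, r k = Some o) -> cur st' o = fin1 o.
Hypothesis cur_kept : forall o, ~ (exists k, r k = Some o) -> cur st' o = cur1 o.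
Hypothesis stat_after : forall k,
  ((stat1 k = SMigr /\ forall o, o \in part1 k -> cur st' o = fin1 o) ->
     stat st' k = SFull) /\
  (~ (stat1 k = SMigr /\ forall o, o \in part1 k -> cur st' o = fin1 o) ->
     stat st' k = stat1 k).

Lemma if_above (A : Type) (x y z : A) k :
  i < k -> (if k < i then x else if k == i then y else z) = z.
Proof. by move=> ik; rewrite ltnNge (ltnW ik) gtn_eqF. Qed.

Lemma mem_Si o : o \in Si -> o = s \/ exists2 j, j < i & o \in part st j.
Proof.
rewrite in_cons => /orP [/eqP ->|/flatten_mapP [j]]; first by left.
by rewrite mem_iota => /andP [_ ji] oj; right; exists j.
Qed.

Lemma part_neq_s k o : o \in part st k -> o != s.
Proof. by move=> ok; apply/eqP => os; apply: s_fresh; exists k; rewrite -os. Qed.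

Lemma notin_Si_above k o : i < k -> o \in part st k -> o \notin Si /\ o != s.
Proof.
move=> ik ok; have os := part_neq_s ok.
split=> //; apply/negP => /mem_Si [os'|[j ji oj]]; first by rewrite os' eqxx in os.
by have := wf_disjoint wf oj ok; lia.
Qed.

Lemma unchanged_above k o : i < k -> o \in part st k -> fin1 o = fin st o /\ cur1 o = cur st o.
Proof. by move=> ik /(notin_Si_above ik) [/negbTE nS /negbTE os]; rewrite /fin1 /cur1 nS os. Qed.

Lemma part_below k : k < i -> part st' k = [::].
Proof. by move=> ki; rewrite part_after /part1 ki. Qed.

Lemma part_at : part st' i = Si.
Proof. by rewrite part_after /part1 ltnn eqxx. Qed.

Lemma part_above k : i < k -> part st' k = part st k.
Proof. by move=> ik; rewrite part_after /part1 if_above. Qed.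

Lemma mem_part_after k o :
  o \in part st' k -> (k = i /\ o \in Si) \/ (i < k /\ o \in part st k).
Proof. by rewrite part_after /part1; case: ltngtP => [//|ik|->]; [right|left]. Qed.

Lemma cur_after o : cur st' o = fin1 o \/ cur st' o = cur1 o.
Proof.
by case: (classic (exists k, r k = Some o)) => [/cur_recolored|/cur_kept] ->; [left|right].
Qed.

Lemma cur_after_above k o : i < k -> o \in part st k ->
  cur st' o = fin st o \/ cur st' o = cur st o.
Proof. by move=> ik /(unchanged_above ik) [<- <-]; apply: cur_after. Qed.

Lemma cur_after_s : cur st' s = fin st' s.
Proof. by rewrite fin_after; case: (cur_after s) => ->; rewrite /fin1 /cur1 mem_head ?eqxx. Qed.

Lemma stat_after_cases k :
  (stat1 k = SMigr /\ finished st' k /\ stat st' k = SFull) \/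
  (~ (stat1 k = SMigr /\ finished st' k) /\ stat st' k = stat1 k).
Proof.
have fin_eq : finished st' k <-> forall o, o \in part1 k -> cur st' o = fin1 o.
  by split=> fk o; move: (fk o); rewrite part_after fin_after.
case: (stat_after k) => to_full keep.
case: (classic (stat1 k = SMigr /\ finished st' k)) => [[m fk]|nfk].
  by left; do 2!split=> //; apply: to_full; split=> //; apply/fin_eq.
by right; split=> //; apply: keep => -[m fk]; apply: nfk; split=> //; apply/fin_eq.
Qed.

Lemma stat_after_below k : k < i -> stat st' k = SEmpty.
Proof. by move=> ki; case: (stat_after_cases k) => [[]|[_ ->]]; rewrite /stat1 ki. Qed.

Lemma stat_after_at : stat st' i <> SEmpty.
Proof. by case: (stat_after_cases i) => [[_ [_ ->]]|[_ ->]] //; rewrite /stat1 ltnn eqxx. Qed.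

Lemma is_empty_after_above k : i < k -> is_empty (stat st' k) = is_empty (stat st k).
Proof.
move=> ik; have stat1E : stat1 k = stat st k by rewrite /stat1 if_above.
by case: (stat_after_cases k) => [[m [_ ->]]|[_ ->]]; rewrite -stat1E ?m.
Qed.

Lemma disjoint_after j k o : o \in part st' j -> o \in part st' k -> j = k.
Proof.
move=> /mem_part_after [[-> oS]|[ij oj]] /mem_part_after [[-> oS']|[ik ok]] //.
- by have := (notin_Si_above ik ok).1; rewrite oS.
- by have := (notin_Si_above ij oj).1; rewrite oS'.
- exact: (wf_disjoint wf oj ok).
Qed.

Lemma empty_after k : stat st' k = SEmpty -> part st' k = [::].
Proof.
case: (ltngtP k i) => [/part_below //|ik|-> /stat_after_at //] sk.
rewrite part_above //; apply: (wf_empty wf).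
by move: (is_empty_after_above ik); rewrite sk; case: (stat st k).
Qed.

Lemma lvl_after_part k : lvl st' < k -> part st' k = [::].
Proof. by rewrite lvl_after => lk; rewrite part_above; [apply: (wf_lvl wf)|]; lia. Qed.

Lemma size_after k : size (part st' k) <= 2 ^ k.
Proof.
case: (ltngtP k i) => [/part_below -> //|ik|->]; first by rewrite part_above // wf_size.
by rewrite part_at; apply: size_flatten_pow2 => j _; apply: wf_size.
Qed.

Lemma colorsets_after F T : colorsets_ok st F T ->
  colorsets_ok st' (fun k => if k == i then t else F k)
    (fun k j => if k == i then (if j == i then t else F j) else T k j).
Proof.
case=> finF curT TF; split.
- move=> k o /mem_part_after [[-> oS]|[ik ok]]; first by rewrite fin_after /fin1 oS eqxx.
  by rewrite fin_after (unchanged_above ik ok).1 (finF _ _ ok) gtn_eqF.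
- move=> k o /mem_part_after [[-> oS]|[ik ok]]; last first.
    rewrite gtn_eqF //; case: (cur_after_above ik ok) => ->; last exact: curT ok.
    by rewrite (finF _ _ ok) /= TF.
  rewrite eqxx; case: (cur_after o) => ->; first by rewrite /fin1 oS /= eqxx.
  case: (mem_Si oS) => [->|[j ji oj]]; first by rewrite /cur1 eqxx /= eqxx.
  rewrite /cur1 (negbTE (part_neq_s oj)) (wf_full wf (wf_below_first_empty wf i_first ji) oj).
  by rewrite (finF _ _ oj) /= ltn_eqF.
- by move=> k; case: ifP => [/eqP ->|_]; rewrite ?eqxx ?TF.
Qed.

Lemma full_after k : stat st' k = SFull -> finished st' k.
Proof.
case: (stat_after_cases k) => [[_ [fk _]] //|[_ ->]].
case: (ltngtP k i) => [ki|ik|->]; rewrite /stat1 ?ki ?ltnn ?eqxx // if_above // => sk o.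
rewrite part_above // fin_after => ok; rewrite (unchanged_above ik ok).1.
by case: (cur_after_above ik ok) => -> //; apply: (wf_full wf sk).
Qed.

Lemma empty_weight_after k : i < k -> (empty_weight (stat st') k).+1 = empty_weight (stat st) k.
Proof.
case: i_first => si below; apply: empty_weight_fill => //.
- exact: stat_after_below.
- exact: stat_after_at.
- exact: is_empty_after_above.
Qed.

Lemma unfinished_above_lt k : i < k -> stat st k = SMigr -> unfinished st' k < unfinished st k.
Proof.
move=> ik m.
have [o0 o0k o0u] : exists2 o, o \in part st k & cur st o != fin st o.
  by apply/hasP; rewrite has_count; case/andP: (wf_migr wf m).
have m1 : stat1 k = SMigr by rewrite /stat1 if_above.
have some_unfinished : exists o, o \in part1 k /\ cur1 o <> fin1 o.
  exists o0; rewrite /part1 if_above //; split=> //.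
  by case: (unchanged_above ik o0k) => -> ->; apply/eqP.
have [o [ro ok ou]] := recolor m1 some_unfinished.
rewrite /part1 if_above // in ok; case: (unchanged_above ik ok) ou => -> -> ou.
rewrite /unfinished part_above //; apply: (count_lt_subpred (x := o)) => //=.
- move=> y yk /=; rewrite fin_after (unchanged_above ik yk).1.
  by case: (cur_after_above ik yk) => ->; rewrite ?eqxx.
- exact/eqP.
- by rewrite fin_after cur_recolored ?eqxx //; exists k.
Qed.

Lemma unfinished_at_lt : unfinished st' i < 2 ^ i.
Proof.
rewrite /unfinished part_at /= cur_after_s eqxx add0n.
apply: leq_ltn_trans (count_size _ _) _.
by apply: size_flatten_pow2 => j _; apply: wf_size.
Qed.

Lemma migr_after k : stat st' k = SMigr ->
  0 < unfinished st' k <= empty_weight (stat st') k.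
Proof.
case: (stat_after_cases k) => [[_ [_ ->]] //|[nfk sk] m'].
have m1 : stat1 k = SMigr by rewrite -sk.
rewrite unfinished_gt0 /= => [|fk]; last by apply: nfk.
case: (ltngtP k i) m1 => [ki|ik|->]; rewrite /stat1 ?ki ?ltnn ?eqxx // ?if_above // => m.
- have := unfinished_above_lt ik m; have := empty_weight_after ik.
  by case/andP: (wf_migr wf m); lia.
- by have := unfinished_at_lt; rewrite -(empty_weight_all stat_after_below).
Qed.

Lemma wf_after : wf_state st'.
Proof.
split.
- exact: disjoint_after.
- exact: empty_after.
- exact: lvl_after_part.
- exact: size_after.
- by have [F [T /colorsets_after cs]] := wf_colorsets wf; do 2!eexists; apply: cs.
- exact: full_after.
- exact: migr_after.
Qed.

End Insertion.

Lemma wf_insert_step (O : eqType) (P : Type) (rel : P -> O -> bool) gamma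
    (st st' : state O) s :
  wf_state st -> insert_step rel gamma st s st' -> wf_state st'.
Proof.
move=> wf [s_fresh [i [i_first [t [g [r [_ [_ [_ [_ [recolor [_ H]]]]]]]]]]]].
case: H => [lvl' [part' [fin' [cur1' [cur2' stat']]]]].
apply: (wf_after wf s_fresh i_first _ lvl' part' fin' cur1' cur2' stat').
by move=> k m /(recolor k m) [o [? ? ? _]]; exists o.
Qed.

Lemma reachable_wf (O : eqType) (P : Type) (rel : P -> O -> bool) gamma l0
    (st : state O) :
  reachable rel gamma l0 st -> wf_state st.
Proof. by elim=> [|? ? ? _ wf step]; [apply: wf_init | apply: wf_insert_step wf step]. Qed.

Lemma used_colorset (O : eqType) (st : state O) F T i t :
    wf_state st -> colorsets_ok st F T -> firstEmpty st i -> used st i t ->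
  exists2 k, i < k <= lvl st & t = T k i.
Proof.
move=> wf [finF curT _] first [o [[k ok] [oi ot]]].
case: (ltngtP k i) => [ki|ik|ki].
- move: oi; rewrite (wf_full wf (wf_below_first_empty wf first ki) ok) (finF _ _ ok) /= => ik.
  by rewrite ik ltnn in ki.
- exists k; last by rewrite -ot (curT _ _ ok) oi.
  rewrite ik leqNgt; apply/negP => /(wf_lvl wf) pk.
  by rewrite pk in ok.
- by rewrite ki (wf_empty wf (proj1 first)) in ok.
Qed.

Theorem mainTheorem9 (O : eqType) (P : Type) (rel : P -> O -> bool)
    (gamma : nat -> nat) (l0 : nat) (st : state O) :
  gamma_um rel gamma ->
  reachable rel gamma l0 st ->
  forall i, firstEmpty st i ->
  exists t, t <= maxn (lvl st) i - i /\ ~ used st i t.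
Proof.
move=> _ /reachable_wf wf i first.
have [F [T cs]] := wf_colorsets wf.
have [|t t_small t_new] :=
  @exists_nat_notin [seq T k i | k <- iota i.+1 (lvl st - i)] (maxn (lvl st) i - i).+1.
  by rewrite size_map size_iota; lia.
exists t; split=> [//|/(used_colorset wf cs first) [k /andP [ik kl] tk]].
move/negP: t_new; apply; rewrite tk; apply: map_f.
by rewrite mem_iota; apply/andP; split; lia.
Qed.
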